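(* Let $(\mathcal{C},\oplus,N,\gamma,\otimes,I,\gamma')$ be a bipermutative category in which $I$ is a terminal object, with unique maps $!_X : X \to I$. Then $N$ is an initial object, the unique map $N\to A$ being $N = A\otimes N \xrightarrow{A\otimes !_N} A\otimes I = A$, and $(\oplus,N)$ is a categorical coproduct, with left injection \[ A = A\oplus (B\otimes N) \xrightarrow{A\oplus (B\otimes !_N)} A\oplus (B\otimes I) = A\oplus B \] and the symmetric right injection $B \to A\oplus B$. The copairing of $f:A\to C$ and $g:B\to C$ is \[ A\oplus B \xrightarrow{f\oplus g} C\oplus C = (I\oplus I)\otimes C \xrightarrow{!_{I\oplus I}\otimes C} I\otimes C = C. \]
   Context: A symmetric monoidal category $(\mathcal{C},\otimes,I,\gamma')$ is strict when its associator and unitors are identities. A bipermutative category is a category $\mathcal{C}$ with two strict symmetric monoidal structures $(\oplus,N,\gamma)$ and $(\otimes,I,\gamma')$ such that, on the nose, $A\otimes(B\oplus C)=(A\otimes B)\oplus(A\otimes C)$ (and likewise on morphisms), $N\otimes A = N = A\otimes N$, and there is a natural isomorphism $\delta^\sharp_{A,B,C}:(A\otimes C)\oplus(B\otimes C)\to(A\oplus B)\otimes C$ (in general not an identity), all of these satisfying Laplaza's coherence conditions for rig (distributive symmetric bimonoidal) categories. The equality $C\oplus C=(I\oplus I)\otimes C$ in the claim is the identification $(I\oplus I)\otimes C \cong (I\otimes C)\oplus(I\otimes C)$ given by $\delta^\sharp$. *)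

(* Hom-sets carry Leibniz equality; "strict" equalities of objects are
   propositional equalities, and the corresponding equalities of morphisms
   are expressed by composing with the canonical morphism [eq_hom e]
   induced by an equality of objects [e : A = B]. *)

Set Implicit Arguments.
Unset Strict Implicit.

Record category := Category {
  ob :> Type;
  hom : ob -> ob -> Type;
  idm : forall A, hom A A;
  comp : forall A B D, hom B D -> hom A B -> hom A D;
  comp_idl : forall A B (f : hom A B), comp (idm B) f = f;
  comp_idr : forall A B (f : hom A B), comp f (idm A) = f;
  comp_assoc : forall A B D E (h : hom D E) (g : hom B D) (f : hom A B),
      comp h (comp g f) = comp (comp h g) f
}.
Arguments hom {c} _ _.
Arguments idm {c} A.
Arguments comp {c A B D} _ _.

Notation "g ∘ f" := (comp g f) (at level 55, left associativity).

Definition eq_hom (C : category) (A B : C) (e : A = B) : hom A B :=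
  match e in (_ = B') return hom A B' with eq_refl => idm A end.
Arguments eq_hom {C A B} e.

Record ssm (C : category) := SSM {
  tens : C -> C -> C;
  tensm : forall A A' B B', hom A A' -> hom B B' -> hom (tens A B) (tens A' B');
  munit : C;
  sym : forall A B, hom (tens A B) (tens B A);
  assocO : forall A B D, tens A (tens B D) = tens (tens A B) D;
  unitlO : forall A, tens munit A = A;
  unitrO : forall A, tens A munit = A;
  tens_id : forall A B, tensm (idm A) (idm B) = idm (tens A B);
  tens_comp : forall A A' A'' B B' B''
      (f : hom A A') (f' : hom A' A'') (g : hom B B') (g' : hom B' B''),
      tensm (f' ∘ f) (g' ∘ g) = tensm f' g' ∘ tensm f g;
  (* strictness on morphisms (associator and unitors are identities) *)
  assocM : forall A A' B B' D D' (f : hom A A') (g : hom B B') (h : hom D D'),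
      eq_hom (assocO A' B' D') ∘ tensm f (tensm g h)
      = tensm (tensm f g) h ∘ eq_hom (assocO A B D);
  unitlM : forall A A' (f : hom A A'),
      eq_hom (unitlO A') ∘ tensm (idm munit) f = f ∘ eq_hom (unitlO A);
  unitrM : forall A A' (f : hom A A'),
      eq_hom (unitrO A') ∘ tensm f (idm munit) = f ∘ eq_hom (unitrO A);
  sym_nat : forall A A' B B' (f : hom A A') (g : hom B B'),
      sym A' B' ∘ tensm f g = tensm g f ∘ sym A B;
  sym_inv : forall A B, sym B A ∘ sym A B = idm (tens A B);
  sym_unit : forall A, eq_hom (unitlO A) ∘ sym A munit = eq_hom (unitrO A);
  sym_hex : forall A B D,
      eq_hom (assocO B D A) ∘ tensm (idm B) (sym A D)
      ∘ eq_hom (eq_sym (assocO B A D)) ∘ tensm (sym A B) (idm D)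
      ∘ eq_hom (assocO A B D)
      = sym A (tens B D)
}.
Arguments tens {C} s _ _.
Arguments tensm {C} s {A A' B B'} _ _.
Arguments munit {C} s.
Arguments sym {C} s A B.
Arguments assocO {C} s A B D.
Arguments unitlO {C} s A.
Arguments unitrO {C} s A.

Section Bip.
Variable C : category.
Variables P T : ssm C.

Local Notation "A ⊕ B" := (tens P A B) (at level 50, left associativity).
Local Notation "A ⊗ B" := (tens T A B) (at level 40, left associativity).
Local Notation "f ⊞ g" := (tensm P f g) (at level 50, left associativity).
Local Notation "f ⊠ g" := (tensm T f g) (at level 40, left associativity).
Local Notation N := (munit P).

Definition mid_swap (X Y Z W : C) : hom ((X ⊕ Y) ⊕ (Z ⊕ W)) ((X ⊕ Z) ⊕ (Y ⊕ W)) :=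
  eq_hom (assocO P X Z (Y ⊕ W))
  ∘ (idm X ⊞ eq_hom (eq_sym (assocO P Z Y W)))
  ∘ (idm X ⊞ (sym P Y Z ⊞ idm W))
  ∘ (idm X ⊞ eq_hom (assocO P Y Z W))
  ∘ eq_hom (eq_sym (assocO P X Y (Z ⊕ W))).

(** Laplaza's axioms for a rig category, specialised to the case where
    ⊕ and ⊗ are strict, left distributivity δ is an identity, and the
    annihilators λ*, ρ* are identities.  [dr A B D] is the natural iso
    δ#_{A,B,D} : (A⊗D)⊕(B⊗D) -> (A⊕B)⊗D of the paper; [dr_inv] is its
    inverse (Laplaza's orientation).  Laplaza's axioms not listed below
    (III, V, IX-XII, XIV, XV, XVIII, XX-XXIV) only involve identities
    in the strict setting and hold automatically. *)
Record bip_axioms := BipAxioms {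
  distlO : forall A B D, A ⊗ (B ⊕ D) = (A ⊗ B) ⊕ (A ⊗ D);
  distlM : forall A A' B B' D D' (f : hom A A') (g : hom B B') (h : hom D D'),
      eq_hom (distlO A' B' D') ∘ (f ⊠ (g ⊞ h))
      = ((f ⊠ g) ⊞ (f ⊠ h)) ∘ eq_hom (distlO A B D);
  zerolO : forall A, N ⊗ A = N;
  zerorO : forall A, A ⊗ N = N;
  zerolM : forall A A' (f : hom A A'),
      eq_hom (zerolO A') ∘ (idm N ⊠ f) = eq_hom (zerolO A);
  zerorM : forall A A' (f : hom A A'),
      eq_hom (zerorO A') ∘ (f ⊠ idm N) = eq_hom (zerorO A);
  dr : forall A B D, hom ((A ⊗ D) ⊕ (B ⊗ D)) ((A ⊕ B) ⊗ D);
  dr_inv : forall A B D, hom ((A ⊕ B) ⊗ D) ((A ⊗ D) ⊕ (B ⊗ D));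
  dr_iso1 : forall A B D, dr_inv A B D ∘ dr A B D = idm _;
  dr_iso2 : forall A B D, dr A B D ∘ dr_inv A B D = idm _;
  dr_nat : forall A A' B B' D D' (f : hom A A') (g : hom B B') (h : hom D D'),
      dr A' B' D' ∘ ((f ⊠ h) ⊞ (g ⊠ h)) = ((f ⊞ g) ⊠ h) ∘ dr A B D;
  lap_I : forall A B D,
      eq_hom (distlO A D B) ∘ (idm A ⊠ sym P B D)
      = sym P (A ⊗ B) (A ⊗ D) ∘ eq_hom (distlO A B D);
  lap_II : forall A B D,
      dr_inv A B D
      = ((sym T D A ⊞ sym T D B) ∘ eq_hom (distlO D A B)) ∘ sym T (A ⊕ B) D;
  lap_IV : forall A B D E,
      (dr_inv A B E ⊞ idm (D ⊗ E)) ∘ dr_inv (A ⊕ B) D E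
        ∘ (eq_hom (assocO P A B D) ⊠ idm E)
      = eq_hom (assocO P (A ⊗ E) (B ⊗ E) (D ⊗ E))
        ∘ (idm (A ⊗ E) ⊞ dr_inv B D E) ∘ dr_inv A (B ⊕ D) E;
  lap_VI : forall A B D E,
      dr_inv (A ⊗ D) (B ⊗ D) E ∘ (dr_inv A B D ⊠ idm E)
        ∘ eq_hom (assocO T (A ⊕ B) D E)
      = (eq_hom (assocO T A D E) ⊞ eq_hom (assocO T B D E)) ∘ dr_inv A B (D ⊗ E);
  lap_VII : forall A B D E,
      (eq_hom (assocO T A B E) ⊞ eq_hom (assocO T A D E))
        ∘ eq_hom (distlO A (B ⊗ E) (D ⊗ E)) ∘ (idm A ⊠ dr_inv B D E)
      = dr_inv (A ⊗ B) (A ⊗ D) E ∘ (eq_hom (distlO A B D) ⊠ idm E)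
        ∘ eq_hom (assocO T A (B ⊕ D) E);
  lap_VIII : forall A B D E,
      (dr_inv A B D ⊞ dr_inv A B E) ∘ eq_hom (distlO (A ⊕ B) D E)
      = mid_swap (A ⊗ D) (A ⊗ E) (B ⊗ D) (B ⊗ E)
        ∘ (eq_hom (distlO A D E) ⊞ eq_hom (distlO B D E)) ∘ dr_inv A B (D ⊕ E);
  lap_XIII : forall A, eq_hom (zerorO A) ∘ sym T N A = eq_hom (zerolO A);
  lap_XVI : forall A B,
      eq_hom (unitlO P (A ⊗ B)) ∘ (eq_hom (zerolO B) ⊞ idm (A ⊗ B)) ∘ dr_inv N A B
      = eq_hom (unitlO P A) ⊠ idm B;
  lap_XVII : forall A B,
      eq_hom (unitrO P (A ⊗ B)) ∘ (idm (A ⊗ B) ⊞ eq_hom (zerolO B)) ∘ dr_inv A N B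
      = eq_hom (unitrO P A) ⊠ idm B;
  lap_XIX : forall A B,
      eq_hom (unitlO P N) ∘ (eq_hom (zerorO A) ⊞ eq_hom (zerorO B)) ∘ dr_inv A B N
      = eq_hom (zerorO (A ⊕ B))
}.
End Bip.

Record bipermutative (C : category) := Bipermutative {
  plus : ssm C;
  times : ssm C;
  bip_ax :> bip_axioms plus times
}.

Section Maps.
Variable C : category.
Variable BP : bipermutative C.
Local Notation P := (plus BP).
Local Notation T := (times BP).
Local Notation "A ⊕ B" := (tens P A B) (at level 50, left associativity).
Local Notation "A ⊗ B" := (tens T A B) (at level 40, left associativity).
Local Notation "f ⊞ g" := (tensm P f g) (at level 50, left associativity).
Local Notation "f ⊠ g" := (tensm T f g) (at level 40, left associativity).
Local Notation N := (munit P).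
Local Notation I := (munit T).
Variable bang : forall X : C, hom X I.

Definition init_map (A : C) : hom N A :=
  eq_hom (unitrO T A) ∘ (idm A ⊠ bang N) ∘ eq_hom (eq_sym (zerorO BP A)).

Definition inl_map (A B : C) : hom A (A ⊕ B) :=
  (idm A ⊞ eq_hom (unitrO T B)) ∘ (idm A ⊞ (idm B ⊠ bang N))
  ∘ (idm A ⊞ eq_hom (eq_sym (zerorO BP B))) ∘ eq_hom (eq_sym (unitrO P A)).

Definition inr_map (A B : C) : hom B (A ⊕ B) :=
  (eq_hom (unitrO T A) ⊞ idm B) ∘ ((idm A ⊠ bang N) ⊞ idm B)
  ∘ (eq_hom (eq_sym (zerorO BP A)) ⊞ idm B) ∘ eq_hom (eq_sym (unitlO P B)).

(** A ⊕ B --(f ⊕ g)--> D ⊕ D = (I ⊗ D) ⊕ (I ⊗ D) --δ#--> (I ⊕ I) ⊗ D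
    --(!_{I⊕I} ⊗ D)--> I ⊗ D = D *)
Definition copair (A B D : C) (f : hom A D) (g : hom B D) : hom (A ⊕ B) D :=
  eq_hom (unitlO T D) ∘ (bang (I ⊕ I) ⊠ idm D) ∘ dr BP I I D
  ∘ (eq_hom (eq_sym (unitlO T D)) ⊞ eq_hom (eq_sym (unitlO T D)))
  ∘ (f ⊞ g).
End Maps.

(* Initiality of N needs no hypothesis on I at all: N annihilates ⊗,
   so any h : N -> A equals h ⊗ I and can be pushed through N ⊗ !_N, giving the
   canonical map.  For the coproduct we name the codiagonal
       codiag D : D ⊕ D = (I ⊗ D) ⊕ (I ⊗ D) --δ#--> (I ⊕ I) ⊗ D --!⊗D--> D,
   so that copair f g = codiag ∘ (f ⊕ g).  Four facts about codiag suffice: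
   it is natural (from naturality of δ#); it is unital, codiag ∘ (D ⊕ init) and
   codiag ∘ (init ⊕ D) are the unit identifications (Laplaza XVI/XVII plus
   terminality of I); and codiag (X ⊕ Y) is codiag X ⊕ codiag Y after the middle
   interchange (Laplaza VIII).  The β-laws follow from unitality and naturality
   of the injections; uniqueness follows from naturality of copair together
   with copair inl inr = id, which is unitality applied inside codiag (A ⊕ B). *)

From Stdlib Require Import ProofIrrelevance.

Set Implicit Arguments.
Unset Strict Implicit.

Section EqHom.
Variable C : category.

Lemma eq_hom_irrel (A B : C) (e e' : A = B) : eq_hom e = eq_hom e'.
Proof. now rewrite (proof_irrelevance _ e e'). Qed.

Lemma eq_hom_refl (A : C) : idm A = eq_hom (eq_refl A).
Proof. reflexivity. Qed.

Lemma eq_hom_self (A : C) (e : A = A) : eq_hom e = idm A.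
Proof. rewrite eq_hom_refl. apply eq_hom_irrel. Qed.

Lemma eq_hom_trans (A B D : C) (e1 : A = B) (e2 : B = D) :
  eq_hom e2 ∘ eq_hom e1 = eq_hom (eq_trans e1 e2).
Proof. destruct e1, e2. apply comp_idl. Qed.

Lemma eq_hom_trans_under (A B D E : C) (e1 : A = B) (e2 : B = D) (x : hom D E) :
  x ∘ eq_hom e2 ∘ eq_hom e1 = x ∘ eq_hom (eq_trans e1 e2).
Proof. now rewrite <- comp_assoc, eq_hom_trans. Qed.

Lemma eq_hom_transpose (A B D : C) (e : A = B) (x : hom D A) (y : hom D B) :
  eq_hom e ∘ x = y -> x = eq_hom (eq_sym e) ∘ y.
Proof. destruct e; simpl; rewrite !comp_idl; auto. Qed.

Lemma assoc_rw (A B D : C) (a : hom B D) (b : hom A B) (c : hom A D) :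
  a ∘ b = c -> forall E (x : hom D E), x ∘ a ∘ b = x ∘ c.
Proof. intros H E x. now rewrite <- comp_assoc, H. Qed.
End EqHom.

Lemma eq_hom_tensm (C : category) (s : ssm C) (A A' B B' : C) (e1 : A = A') (e2 : B = B') :
  tensm s (eq_hom e1) (eq_hom e2) = eq_hom (f_equal2 (tens s) e1 e2).
Proof. destruct e1, e2; simpl. rewrite (tens_id s A B), eq_hom_refl. apply eq_hom_irrel. Qed.

(* Closes coherence goals built from identifications only: fuse all composites
   and tensors of [eq_hom]s and compare the results by proof irrelevance. *)
Ltac eq_hom_normalize :=
  repeat rewrite comp_assoc;
  repeat rewrite eq_hom_refl;
  repeat (rewrite eq_hom_tensm || rewrite eq_hom_trans || rewrite eq_hom_trans_under);
  repeat rewrite <- eq_hom_refl;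
  repeat rewrite eq_hom_self;
  repeat rewrite comp_idr; repeat rewrite comp_idl;
  first [reflexivity | apply eq_hom_irrel | (f_equal; apply eq_hom_irrel)].

Section Monoidal.
Variables (C : category) (s : ssm C).
Local Notation "f ⊙ g" := (tensm s f g) (at level 40, left associativity).

Lemma tensm_comp_r (A B B' B'' : C) (f : hom B B') (g : hom B' B'') :
  idm A ⊙ (g ∘ f) = (idm A ⊙ g) ∘ (idm A ⊙ f).
Proof. now rewrite <- tens_comp, comp_idl. Qed.

Lemma tensm_comp_l (A B B' B'' : C) (f : hom B B') (g : hom B' B'') :
  (g ∘ f) ⊙ idm A = (g ⊙ idm A) ∘ (f ⊙ idm A).
Proof. now rewrite <- tens_comp, comp_idl. Qed.

Lemma tensm_factor_l (A A' B B' : C) (f : hom A A') (g : hom B B') :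
  f ⊙ g = (f ⊙ idm B') ∘ (idm A ⊙ g).
Proof. now rewrite <- tens_comp, comp_idl, comp_idr. Qed.

Lemma tensm_factor_r (A A' B B' : C) (f : hom A A') (g : hom B B') :
  f ⊙ g = (idm A' ⊙ g) ∘ (f ⊙ idm B).
Proof. now rewrite <- tens_comp, comp_idl, comp_idr. Qed.

Lemma tensm_interchange_r (X X' Y0 Y1 Y2 Y3 : C) (f : hom X X')
  (a : hom Y1 Y2) (b : hom Y0 Y1) (c : hom Y3 Y2) (a' : hom Y0 Y3) :
  a ∘ b = c ∘ a' -> (idm X' ⊙ a) ∘ (f ⊙ b) = (f ⊙ c) ∘ (idm X ⊙ a').
Proof. intros H. now rewrite <- !tens_comp, comp_idl, comp_idr, H. Qed.

Lemma tensm_interchange_l (X X' Y0 Y1 Y2 Y3 : C) (f : hom X X')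
  (a : hom Y1 Y2) (b : hom Y0 Y1) (c : hom Y3 Y2) (a' : hom Y0 Y3) :
  a ∘ b = c ∘ a' -> (a ⊙ idm X') ∘ (b ⊙ f) = (c ⊙ f) ∘ (a' ⊙ idm X).
Proof. intros H. now rewrite <- !tens_comp, comp_idl, comp_idr, H. Qed.

Lemma unitl_natural_inv (A A' : C) (h : hom A A') :
  (idm (munit s) ⊙ h) ∘ eq_hom (eq_sym (unitlO s A)) = eq_hom (eq_sym (unitlO s A')) ∘ h.
Proof.
  rewrite (eq_hom_transpose (unitlM s h)).
  now rewrite !comp_assoc, eq_hom_trans_under, eq_hom_self, comp_idr.
Qed.

Lemma unitr_natural_inv (A A' : C) (h : hom A A') :
  (h ⊙ idm (munit s)) ∘ eq_hom (eq_sym (unitrO s A)) = eq_hom (eq_sym (unitrO s A')) ∘ h.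
Proof.
  rewrite (eq_hom_transpose (unitrM s h)).
  now rewrite !comp_assoc, eq_hom_trans_under, eq_hom_self, comp_idr.
Qed.

Lemma assoc_natural_inv (A A' B B' D D' : C) (f : hom A A') (g : hom B B') (h : hom D D') :
  eq_hom (eq_sym (assocO s A' B' D')) ∘ ((f ⊙ g) ⊙ h)
  = (f ⊙ (g ⊙ h)) ∘ eq_hom (eq_sym (assocO s A B D)).
Proof.
  rewrite (eq_hom_transpose (assocM s f g h)).
  now rewrite !comp_assoc, eq_hom_trans_under, eq_hom_self, comp_idr.
Qed.

Lemma sym_unit_unit : sym s (munit s) (munit s) = idm _.
Proof. rewrite (eq_hom_transpose (sym_unit s (munit s))). eq_hom_normalize. Qed.

Lemma mid_swap_natural (X X' Y Y' Z Z' W W' : C)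
  (f1 : hom X X') (f2 : hom Y Y') (f3 : hom Z Z') (f4 : hom W W') :
  mid_swap s X' Y' Z' W' ∘ ((f1 ⊙ f2) ⊙ (f3 ⊙ f4))
  = ((f1 ⊙ f3) ⊙ (f2 ⊙ f4)) ∘ mid_swap s X Y Z W.
Proof.
  unfold mid_swap. rewrite !comp_assoc.
  rewrite (assoc_rw (assoc_natural_inv f1 f2 (f3 ⊙ f4))), !comp_assoc.
  rewrite (assoc_rw (tensm_interchange_r f1 (assocM s f2 f3 f4))), !comp_assoc.
  rewrite (assoc_rw (tensm_interchange_r f1 (tensm_interchange_l f4 (sym_nat s f2 f3)))).
  rewrite !comp_assoc.
  rewrite (assoc_rw (tensm_interchange_r f1 (assoc_natural_inv f3 f2 f4))), !comp_assoc.
  now rewrite (assocM s f1 f3 (f2 ⊙ f4)), ?comp_assoc.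
Qed.

Lemma mid_swap_unit (A B : C) : mid_swap s A (munit s) (munit s) B = idm _.
Proof. unfold mid_swap. rewrite sym_unit_unit. eq_hom_normalize. Qed.
End Monoidal.

Section Distributivity.
Variables (C : category) (BP : bipermutative C).
Local Notation P := (plus BP).
Local Notation T := (times BP).
Local Notation "A ⊕ B" := (tens P A B) (at level 50, left associativity).
Local Notation "A ⊗ B" := (tens T A B) (at level 40, left associativity).
Local Notation "f ⊞ g" := (tensm P f g) (at level 50, left associativity).
Local Notation "f ⊠ g" := (tensm T f g) (at level 40, left associativity).
Local Notation N := (munit P).

Lemma dr_unit_l (A B : C) :
  (eq_hom (unitlO P A) ⊠ idm B) ∘ dr BP N A B
  = eq_hom (unitlO P (A ⊗ B)) ∘ (eq_hom (zerolO BP B) ⊞ idm (A ⊗ B)).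
Proof. now rewrite <- (lap_XVI BP A B), <- !comp_assoc, dr_iso1, comp_idr. Qed.

Lemma dr_unit_r (A B : C) :
  (eq_hom (unitrO P A) ⊠ idm B) ∘ dr BP A N B
  = eq_hom (unitrO P (A ⊗ B)) ∘ (idm (A ⊗ B) ⊞ eq_hom (zerolO BP B)).
Proof. now rewrite <- (lap_XVII BP A B), <- !comp_assoc, dr_iso1, comp_idr. Qed.

Lemma tensm_distl (A A' B D : C) (f : hom A A') :
  f ⊠ idm (B ⊕ D)
  = eq_hom (eq_sym (distlO BP A' B D)) ∘ ((f ⊠ idm B) ⊞ (f ⊠ idm D)) ∘ eq_hom (distlO BP A B D).
Proof.
  rewrite <- (tens_id P B D), <- comp_assoc.
  exact (eq_hom_transpose (distlM BP f (idm B) (idm D))).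
Qed.

Lemma dr_distl (A B D E : C) :
  eq_hom (distlO BP (A ⊕ B) D E) ∘ dr BP A B (D ⊕ E)
  = (dr BP A B D ⊞ dr BP A B E) ∘ mid_swap P (A ⊗ D) (A ⊗ E) (B ⊗ D) (B ⊗ E)
    ∘ (eq_hom (distlO BP A D E) ⊞ eq_hom (distlO BP B D E)).
Proof.
  assert (Hinv : (dr BP A B D ⊞ dr BP A B E) ∘ (dr_inv BP A B D ⊞ dr_inv BP A B E) = idm _).
  { now rewrite <- tens_comp, !dr_iso2, tens_id. }
  rewrite <- (comp_idl (eq_hom _ ∘ _)), <- Hinv, comp_assoc.
  rewrite <- (comp_assoc _ (dr_inv BP A B D ⊞ dr_inv BP A B E)).
  rewrite (lap_VIII BP A B D E), <- !comp_assoc, dr_iso1, comp_idr.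
  now rewrite !comp_assoc.
Qed.
End Distributivity.

Section Coproduct.
Variables (C : category) (BP : bipermutative C).
Local Notation P := (plus BP).
Local Notation T := (times BP).
Local Notation "A ⊕ B" := (tens P A B) (at level 50, left associativity).
Local Notation "A ⊗ B" := (tens T A B) (at level 40, left associativity).
Local Notation "f ⊞ g" := (tensm P f g) (at level 50, left associativity).
Local Notation "f ⊠ g" := (tensm T f g) (at level 40, left associativity).
Local Notation N := (munit P).
Local Notation I := (munit T).
Variable bang : forall X : C, hom X I.

(* N is initial, whatever the chosen maps into I are:
   h = h ⊗ I = (A ⊗ !_N) ∘ (h ⊗ N), and h ⊗ N is an identification since N
   annihilates ⊗. *)
Lemma init_unique (A : C) (h : hom N A) : h = init_map bang A.
Proof.
  assert (Hunit : h = eq_hom (unitrO T A) ∘ (h ⊠ idm I) ∘ eq_hom (eq_sym (unitrO T N))).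
  { rewrite (unitrM T h), <- comp_assoc, eq_hom_trans, eq_hom_self. now rewrite comp_idr. }
  assert (Hbang : eq_hom (eq_sym (unitrO T N)) = (idm N ⊠ bang N) ∘ eq_hom (eq_sym (zerolO BP N))).
  { rewrite (eq_hom_transpose (zerolM BP (bang N))). eq_hom_normalize. }
  assert (Hzero : h ⊠ idm N = eq_hom (eq_sym (zerorO BP A)) ∘ eq_hom (zerorO BP N)).
  { exact (eq_hom_transpose (zerorM BP h)). }
  rewrite Hunit, Hbang, comp_assoc, <- (comp_assoc _ (h ⊠ idm I)), <- tens_comp.
  rewrite comp_idl, comp_idr, (tensm_factor_r T h (bang N)), Hzero.
  unfold init_map. eq_hom_normalize.
Qed.

Lemma init_comp (X Y : C) (g : hom X Y) : g ∘ init_map bang X = init_map bang Y.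
Proof. apply init_unique. Qed.

Lemma init_times (D : C) :
  init_map bang (I ⊗ D) = (init_map bang I ⊠ idm D) ∘ eq_hom (eq_sym (zerolO BP D)).
Proof. symmetry. apply init_unique. Qed.

Lemma inl_as_init (A B : C) :
  inl_map bang A B = (idm A ⊞ init_map bang B) ∘ eq_hom (eq_sym (unitrO P A)).
Proof. unfold inl_map, init_map. now rewrite !tensm_comp_r, ?comp_assoc. Qed.

Lemma inr_as_init (A B : C) :
  inr_map bang A B = (init_map bang A ⊞ idm B) ∘ eq_hom (eq_sym (unitlO P B)).
Proof. unfold inr_map, init_map. now rewrite !tensm_comp_l, ?comp_assoc. Qed.

Lemma inl_natural (A A' B B' : C) (u : hom A A') (v : hom B B') :
  (u ⊞ v) ∘ inl_map bang A B = inl_map bang A' B' ∘ u.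
Proof.
  rewrite !inl_as_init, comp_assoc, <- tens_comp, comp_idr, init_comp.
  rewrite (tensm_factor_r P u (init_map bang B')), <- !comp_assoc.
  f_equal. apply unitr_natural_inv.
Qed.

Lemma inr_natural (A A' B B' : C) (u : hom A A') (v : hom B B') :
  (u ⊞ v) ∘ inr_map bang A B = inr_map bang A' B' ∘ v.
Proof.
  rewrite !inr_as_init, comp_assoc, <- tens_comp, comp_idr, init_comp.
  rewrite (tensm_factor_l P (init_map bang A') v), <- !comp_assoc.
  f_equal. apply unitl_natural_inv.
Qed.

Definition codiag (D : C) : hom (D ⊕ D) D :=
  eq_hom (unitlO T D) ∘ (bang (I ⊕ I) ⊠ idm D) ∘ dr BP I I D
  ∘ (eq_hom (eq_sym (unitlO T D)) ⊞ eq_hom (eq_sym (unitlO T D))).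

Lemma copair_as_codiag (A B D : C) (f : hom A D) (g : hom B D) :
  copair bang f g = codiag D ∘ (f ⊞ g).
Proof. reflexivity. Qed.

Lemma codiag_natural (X D : C) (h : hom X D) : codiag D ∘ (h ⊞ h) = h ∘ codiag X.
Proof.
  unfold codiag.
  rewrite <- comp_assoc, <- tens_comp, <- !unitl_natural_inv, tens_comp, !comp_assoc.
  rewrite (assoc_rw (dr_nat BP (idm I) (idm I) h)), tens_id, !comp_assoc.
  rewrite (assoc_rw (eq_sym (tens_comp T (idm _) _ h (idm _)))), comp_idr, comp_idl.
  rewrite (tensm_factor_r T (bang _) h), !comp_assoc, (unitlM T h).
  now rewrite ?comp_assoc.
Qed.

Lemma copair_natural (A B X D : C) (f : hom A X) (g : hom B X) (h : hom X D) :
  copair bang (h ∘ f) (h ∘ g) = h ∘ copair bang f g.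
Proof.
  rewrite !copair_as_codiag, tens_comp, comp_assoc, codiag_natural.
  now rewrite comp_assoc.
Qed.

Lemma codiag_plus (X Y : C) :
  codiag (X ⊕ Y) = (codiag X ⊞ codiag Y) ∘ mid_swap P X Y X Y.
Proof.
  assert (Hin : (eq_hom (distlO BP I X Y) ⊞ eq_hom (distlO BP I X Y))
                ∘ (eq_hom (eq_sym (unitlO T (X ⊕ Y))) ⊞ eq_hom (eq_sym (unitlO T (X ⊕ Y))))
                = (eq_hom (eq_sym (unitlO T X)) ⊞ eq_hom (eq_sym (unitlO T Y)))
                  ⊞ (eq_hom (eq_sym (unitlO T X)) ⊞ eq_hom (eq_sym (unitlO T Y)))).
  { eq_hom_normalize. }
  assert (Hout : eq_hom (unitlO T (X ⊕ Y)) ∘ eq_hom (eq_sym (distlO BP I X Y))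
                 = eq_hom (unitlO T X) ⊞ eq_hom (unitlO T Y)).
  { eq_hom_normalize. }
  unfold codiag.
  rewrite (tensm_distl BP X Y (bang (I ⊕ I))), !comp_assoc.
  rewrite (assoc_rw (dr_distl BP I I X Y)), !comp_assoc, <- (comp_assoc _ _ (_ ⊞ _)), Hin.
  rewrite (assoc_rw (mid_swap_natural _ _ _ _ _)), Hout, !tens_comp.
  now rewrite ?comp_assoc.
Qed.

Hypothesis bang_unique : forall (X : C) (f : hom X I), f = bang X.

Lemma terminal_eq (X : C) (f g : hom X I) : f = g.
Proof. now rewrite (bang_unique f), (bang_unique g). Qed.

(* After
   naturality of δ#, the map !_{I⊕I} ∘ (I ⊕ init) is the identification
   I ⊕ N = I by terminality, and Laplaza XVII finishes. *)
Lemma codiag_unit_r (D : C) :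
  codiag D ∘ (idm D ⊞ init_map bang D) = eq_hom (unitrO P D).
Proof.
  assert (Hdr : dr BP I I D ∘ (idm (I ⊗ D) ⊞ (init_map bang I ⊠ idm D))
                = ((idm I ⊞ init_map bang I) ⊠ idm D) ∘ dr BP I N D).
  { rewrite <- (dr_nat BP (idm I) (init_map bang I) (idm D)). now rewrite tens_id. }
  unfold codiag.
  rewrite <- comp_assoc, <- tens_comp, comp_idr, init_comp, init_times.
  rewrite (tensm_factor_r P (eq_hom _)), tensm_comp_r, !comp_assoc.
  rewrite (assoc_rw Hdr), !comp_assoc, (assoc_rw (eq_sym (tensm_comp_l _ _ _ _))).
  rewrite (terminal_eq (bang (I ⊕ I) ∘ _) (eq_hom (unitrO P I))).
  rewrite (assoc_rw (dr_unit_r BP I D)).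
  eq_hom_normalize.
Qed.

Lemma codiag_unit_l (D : C) :
  codiag D ∘ (init_map bang D ⊞ idm D) = eq_hom (unitlO P D).
Proof.
  assert (Hdr : dr BP I I D ∘ ((init_map bang I ⊠ idm D) ⊞ idm (I ⊗ D))
                = ((init_map bang I ⊞ idm I) ⊠ idm D) ∘ dr BP N I D).
  { rewrite <- (dr_nat BP (init_map bang I) (idm I) (idm D)). now rewrite tens_id. }
  unfold codiag.
  rewrite <- comp_assoc, <- tens_comp, comp_idr, init_comp, init_times.
  rewrite (tensm_factor_l P _ (eq_hom _)), tensm_comp_l, !comp_assoc.
  rewrite (assoc_rw Hdr), !comp_assoc, (assoc_rw (eq_sym (tensm_comp_l _ _ _ _))).
  rewrite (terminal_eq (bang (I ⊕ I) ∘ _) (eq_hom (unitlO P I))).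
  rewrite (assoc_rw (dr_unit_l BP I D)).
  eq_hom_normalize.
Qed.

Lemma codiag_inl (D : C) : codiag D ∘ inl_map bang D D = idm D.
Proof. rewrite inl_as_init, comp_assoc, codiag_unit_r. eq_hom_normalize. Qed.

Lemma codiag_inr (D : C) : codiag D ∘ inr_map bang D D = idm D.
Proof. rewrite inr_as_init, comp_assoc, codiag_unit_l. eq_hom_normalize. Qed.

Lemma copair_inl (A B D : C) (f : hom A D) (g : hom B D) :
  copair bang f g ∘ inl_map bang A B = f.
Proof.
  rewrite copair_as_codiag, <- comp_assoc, inl_natural, comp_assoc, codiag_inl.
  apply comp_idl.
Qed.

Lemma copair_inr (A B D : C) (f : hom A D) (g : hom B D) :
  copair bang f g ∘ inr_map bang A B = g.
Proof.
  rewrite copair_as_codiag, <- comp_assoc, inr_natural, comp_assoc, codiag_inr.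
  apply comp_idl.
Qed.

(* The η-law: copairing the injections gives the identity.  Via codiag_plus,
   the middle interchange moves the two inits next to each other's summand,
   where unitality of codiag applies. *)
Lemma copair_injections (A B : C) :
  copair bang (inl_map bang A B) (inr_map bang A B) = idm (A ⊕ B).
Proof.
  rewrite copair_as_codiag, codiag_plus, inl_as_init, inr_as_init, tens_comp, !comp_assoc.
  rewrite (assoc_rw (mid_swap_natural _ _ _ _ _)), mid_swap_unit, comp_idr.
  rewrite <- tens_comp, codiag_unit_r, codiag_unit_l.
  eq_hom_normalize.
Qed.
End Coproduct.

Theorem mainTheorem1 (C : category) (BP : bipermutative C)
  (bang : forall X : C, hom X (munit (times BP)))
  (bang_unique : forall (X : C) (f : hom X (munit (times BP))), f = bang X) :
  (* N is initial, with unique map init_map *)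
  (forall (A : C) (h : hom (munit (plus BP)) A), h = init_map bang A) /\
  (* (⊕, N) is a coproduct with injections inl_map, inr_map and copairing copair *)
  (forall (A B D : C) (f : hom A D) (g : hom B D),
      copair bang f g ∘ inl_map bang A B = f /\
      copair bang f g ∘ inr_map bang A B = g /\
      (forall h : hom (tens (plus BP) A B) D,
          h ∘ inl_map bang A B = f -> h ∘ inr_map bang A B = g ->
          h = copair bang f g)).
Proof.
  split.
  - intros A h. apply init_unique.
  - intros A B D f g. split; [|split].
    + now apply copair_inl.
    + now apply copair_inr.
    + intros h Hf Hg. subst f g.
      rewrite copair_natural, copair_injections by exact bang_unique.
      symmetry. apply comp_idr.
Qed.
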